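(* Let $\{c_n\}_{n\in\mathbb{N}^+}$ be a sequence of real numbers with $c_n\to\infty$ as $n\to\infty$. Then there exists a continuous function $f:\mathbb{R}\to\mathbb{R}$ which is Lebesgue integrable on $\mathbb{R}$ and such that for every real $x\neq 0$, $$\limsup_{n\to\infty} c_n\, f(n\,x)=\infty,$$ where $n$ ranges over the positive integers.
   Context: $\mathbb{N}^+=\{1,2,\dots\}$. *)

From HB Require Import structures.
From mathcomp Require Import all_boot all_order all_algebra.
From mathcomp Require Import all_classical all_reals all_analysis.

From mathcomp Require Import all_boot all_order all_algebra.
From mathcomp Require Import all_classical all_reals all_analysis.
From mathcomp Require Import ring lra zify measurable_realfun.
(* Take f = sum_j h_j * (plateau equal to 1 for |t| in [a_j, a_j + j]), with
   heights h_j = 1 / ((j+1)(j+2)^2), so that the j-th term has mass at most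
   2 / ((j+1)(j+2)) and f is integrable; the plateaus recede to infinity, so
   the sum is locally finite and f is continuous.  Given x <> 0 and j > |x|,
   the multiples n|x| advance by steps shorter than the plateau, so some n|x|
   lands in (a_j, a_j + |x|]; then a_j < j n, and a_j is chosen so large that
   this forces c_n >= j / h_j, whence c_n f(n x) >= j. *)

Import Order.TTheory GRing.Theory Num.Theory.
Import numFieldTopology.Exports numFieldNormedType.Exports.
Local Open Scope classical_set_scope.
Local Open Scope ring_scope.

Section Plateau.
Context {R : realType}.
Implicit Types a b s : R.

Definition plateau a b s : R :=
  Num.max 0 (Num.min 1 (Num.min (s - a + 1) (b + 1 - s))).

Lemma plateau_ge0 a b s : 0 <= plateau a b s.
Proof. by rewrite /plateau le_max lexx. Qed.

Lemma plateau_le1 a b s : plateau a b s <= 1.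
Proof. by rewrite /plateau ge_max ler01 ge_min lexx. Qed.

Lemma plateau_eq1 a b s : a <= s <= b -> plateau a b s = 1.
Proof.
move=> /andP[a_s s_b]; rewrite /plateau min_l ?max_r ?ler01 //.
by rewrite le_min; apply/andP; split; lra.
Qed.

Lemma plateau_eq0 a b s : (s <= a - 1) || (b + 1 <= s) -> plateau a b s = 0.
Proof.
move=> hs; rewrite /plateau max_l // !ge_min; apply/orP; right.
by case/orP: hs => hs; apply/orP; [left|right]; lra.
Qed.

Lemma continuous_plateau a b : continuous (plateau a b).
Proof.
move=> s; apply: (@continuous_max _ _ (cst 0) (fun s => Num.min 1 _)).
  exact: cvg_cst.
apply: (@continuous_min _ _ (cst 1) (fun s => Num.min _ _)); first exact: cvg_cst.
apply: (@continuous_min _ _ (fun s => s - a + 1) (fun s => b + 1 - s)).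
  by apply: continuousD; [apply: continuousB; [exact: cvg_id|exact: cvg_cst]|exact: cvg_cst].
by apply: continuousB; [exact: cvg_cst|exact: cvg_id].
Qed.

Lemma continuous_plateau_norm a b : continuous (fun x : R => plateau a b `|x|).
Proof.
by move=> x; exact: continuous_comp (@norm_continuous _ R^o x) (continuous_plateau _ _ _).
Qed.

Lemma integral_plateau_norm_le (h a b : R) : 0 <= h -> a <= b ->
  (\int[@lebesgue_measure R]_(x in setT) (h * plateau a b `|x|)%:E
    <= (h * (2 * (b - a + 2)))%:E)%E.
Proof.
move=> h0 ab.
pose S : set R := `[a - 1, b + 1] `|` `[- (b + 1), - (a - 1)].
have mS : measurable S by apply: measurableU.
have plateau_le_indic x : h * plateau a b `|x| <= h * \1_S x.
  rewrite ler_wpM2l // indicE.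
  have [xS|xS] := boolP (x \in S); first exact: plateau_le1.
  rewrite le_eqVlt plateau_eq0 ?eqxx //; apply: contraNT xS.
  rewrite negb_or -!ltNge => /andP[h1 h2]; rewrite inE /S /= !in_itv /=.
  have [x0|x0] := leP 0 x; [left|right].
    by move: h1 h2; rewrite ger0_norm // => h1 h2; apply/andP; split; lra.
  by move: h1 h2; rewrite ltr0_norm // => h1 h2; apply/andP; split; lra.
apply: (@le_trans _ _ (\int[@lebesgue_measure R]_(x in setT) (h * \1_S x)%:E)%E).
  apply: ge0_le_integral => //.
  - by move=> x _; rewrite lee_fin mulr_ge0 ?plateau_ge0.
  - apply/measurable_EFinP; apply: continuous_measurable_fun => x.
    apply: (@continuousM _ _ (cst h) (fun x => plateau a b `|x|)); first exact: cvg_cst.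
    exact: continuous_plateau_norm.
  - by apply/measurable_EFinP; apply: measurable_funM => //; exact: measurable_indic.
  - by move=> x _; rewrite lee_fin.
have := @integralZl_indic _ _ _ (@lebesgue_measure R) setT measurableT (fun=> S) h.
rewrite /= => ->//; last by rewrite ltNge h0.
rewrite integral_indic // setIT EFinM lee_wpmul2l ?lee_fin //.
rewrite /S; apply: le_trans (measureU2 (@lebesgue_measure R) (measurable_itv _) (measurable_itv _)) _.
have itv_len (u v : R) : u <= v -> (@lebesgue_measure R `[u, v]%classic <= (v - u)%:E)%E.
  by move=> uv; rewrite lebesgue_measure_itv /= lte_fin; case: ltgtP uv => // ->; rewrite subrr.
rewrite (_ : 2 * (b - a + 2) = (b + 1 - (a - 1)) + (- (a - 1) - - (b + 1))); last by ring.
by rewrite EFinD; apply: leeD; apply: itv_len; lra.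
Qed.
End Plateau.

Section LocallyFiniteSum.
Context {R : realType} (g : nat -> R -> R).
Hypothesis g_ge0 : forall j t, 0 <= g j t.
Hypothesis g_cont : forall j, continuous (g j).
Hypothesis g_vanish : forall j t, `|t| <= j%:R -> g j t = 0.

(* By [g_vanish] the terms with [j > |t|] are zero, so this is the full series. *)
Definition lfsum (t : R) : R := \sum_(0 <= j < (Num.truncn `|t|).+1) g j t.

Lemma lfsum_partial n t : ((Num.truncn `|t|).+1 <= n)%N ->
  \sum_(0 <= j < n) g j t = lfsum t.
Proof.
move=> tn; rewrite /lfsum (big_cat_nat _ (n := (Num.truncn `|t|).+1)) //=.
rewrite [X in _ + X]big_nat_cond [X in _ + X]big1 ?addr0 //.
move=> j /andP[/andP[tj _] _]; apply: g_vanish.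
have /andP[_ /ltW] := truncn_itv (normr_ge0 t).
by move/le_trans; apply; rewrite ler_nat.
Qed.

Lemma lfsum_ge_term j t : g j t <= lfsum t.
Proof.
rewrite -(lfsum_partial _ t (leq_maxl _ j.+1)).
rewrite (big_cat_nat _ (n := j)) ?leq_max ?leqnSn ?orbT //=.
rewrite (big_cat_nat _ (m := j) (n := j.+1)) ?leq_max ?leqnn ?orbT //=.
by rewrite big_nat1 ler_wpDl ?ler_wpDr ?sumr_ge0.
Qed.

Lemma lfsum_ge0 t : 0 <= lfsum t.
Proof. exact: le_trans (g_ge0 0 t) (lfsum_ge_term 0 t). Qed.

Lemma continuous_lfsum : continuous lfsum.
Proof.
move=> t0; pose n := (Num.truncn `|t0|).+2.
have partial_cont : continuous (fun t => \sum_(0 <= j < n) g j t).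
  elim: n => [|n IHn].
    by under eq_fun do rewrite big_geq //; exact: cst_continuous.
  have -> : (fun t => \sum_(0 <= j < n.+1) g j t) = (fun t => \sum_(0 <= j < n) g j t) + g n.
    by apply/funext => t; rewrite big_nat_recr.
  move=> t; exact: (continuousD (IHn t) (g_cont n t)).
have near_t0 : \forall t \near t0, \sum_(0 <= j < n) g j t = lfsum t.
  near=> t; apply: lfsum_partial; rewrite ltnS -ltnS truncn_lt_nat //.
  have tt0 : `|t0 - t| < 1.
    by near: t; apply: filterS (@near_ball R R^o t0 1 ltr01) => t.
  have /andP[_ t0n] := truncn_itv (normr_ge0 t0).
  have := ler_normD t0 (t - t0); rewrite addrC subrK distrC.
  by rewrite -addn1 -addn1 !natrD; lra.
rewrite /prop_for /continuous_at -(lfsum_partial _ t0 (leqnSn _)).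
exact: cvg_trans (near_eq_cvg near_t0) (partial_cont t0).
Unshelve. all: by end_near.
Qed.

Lemma lfsum_series t : (lfsum t)%:E = (\sum_(j <oo) (g j t)%:E)%E.
Proof.
apply/esym/lim_near_cst => //; near=> n.
rewrite sumEFin; congr (_%:E); apply: lfsum_partial.
by near: n; exists (Num.truncn `|t|).+1.
Unshelve. all: by end_near.
Qed.

Lemma integrable_lfsum :
  (\sum_(j <oo) \int[@lebesgue_measure R]_(x in setT) (g j x)%:E < +oo)%E ->
  (@lebesgue_measure R).-integrable setT (fun x => (lfsum x)%:E).
Proof.
move=> sum_int_fin; apply/integrableP; split.
  by apply/measurable_EFinP; apply: continuous_measurable_fun; exact: continuous_lfsum.
under eq_integral => x _ do rewrite gee0_abs ?lee_fin ?lfsum_ge0 // lfsum_series.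
rewrite integral_nneseries // => [j|j x _]; last by rewrite lee_fin.
by apply/measurable_EFinP; apply: continuous_measurable_fun.
Qed.
End LocallyFiniteSum.

Lemma limn_esup_EFin_eqy {R : realType} (u : nat -> R) :
  (forall m (M : R), exists2 n, (m <= n)%N & M <= u n) ->
  limn_esup (fun n => (u n)%:E) = +oo%E.
Proof.
move=> u_unbounded; rewrite limn_esup_lim.
suff -> : esups (fun n => (u n)%:E) = cst +oo%E by exact: lim_cst.
apply/funext => m; apply/eqyP => M _.
have [n mn Mun] := u_unbounded m M.
by apply: le_ereal_sup_tmp; exists (u n)%:E; [exists n|rewrite lee_fin].
Qed.

Lemma exists_nat_mul_in_window {R : realType} (a y : R) : 0 <= a -> 0 < y ->
  exists n : nat, a < n%:R * y <= a + y.
Proof.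
move=> a0 y0; have /andP[aylo ayhi] := truncn_itv (divr_ge0 a0 (ltW y0)).
have ayE : a / y * y = a by rewrite divfK ?gt_eqF.
exists (Num.truncn (a / y)).+1; rewrite -addn1 natrD mulrDl mul1r.
move: aylo ayhi; rewrite -(ler_pM2r y0) -(ltr_pM2r y0) ayE -addn1 natrD mulrDl mul1r.
by move=> ? ?; apply/andP; split; lra.
Qed.

Section Construction.
Context {R : realType} {c : nat -> R}.
Hypothesis c_cvgy : c @ \oo --> +oo.

Definition height (j : nat) : R := ((j.+1)%:R * (j.+2)%:R ^+ 2)^-1.

Lemma height_gt0 j : 0 < height j.
Proof. by rewrite invr_gt0 mulr_gt0 // exprn_gt0. Qed.

Lemma nneseries_height_le :
  (\sum_(j <oo) (height j * (2 * (j.+2)%:R))%:E <= 2%:E)%E.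
Proof.
have telescope n : \sum_(0 <= j < n) height j * (2 * (j.+2)%:R) = 2 - 2 / n.+1%:R.
  elim: n => [|n IHn]; first by rewrite big_geq // divr1 subrr.
  rewrite big_nat_recr //= IHn /height -[n.+2]addn1 natrD.
  by field; have n0 := ler0n R n; apply/andP; split; apply/eqP; lra.
have term_ge0 j : (0 <= j)%N -> true -> (0 <= (height j * (2 * (j.+2)%:R))%:E)%E.
  by move=> _ _; rewrite lee_fin mulr_ge0 // ltW // height_gt0.
rewrite (cvg_lim _ (ereal_nondecreasing_cvgn (ereal_nondecreasing_series term_ge0))) //.
apply: ge_ereal_sup => _ [n _ <-] /=.
by rewrite sumEFin telescope lee_fin gerBl divr_ge0.
Qed.

Lemma c_eventually_ge (K : R) : exists N, forall n, (N <= n)%N -> K <= c n.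
Proof. by have [N _ KN] := proj1 (cvgryPge c) c_cvgy K; exists N. Qed.

Definition c_rank (K : R) : nat := projT1 (cid (c_eventually_ge K)).

Lemma c_rank_le K n : (c_rank K <= n)%N -> K <= c n.
Proof. exact: (projT2 (cid (c_eventually_ge K))). Qed.

Definition offset (j : nat) : nat := (j.+1 * (c_rank (j%:R / height j) + j).+1)%N.

Lemma offset_gt j : (j < offset j)%N.
Proof. by rewrite /offset; apply: leq_pmulr. Qed.

Lemma c_ge_of_offset_lt j n : (offset j < j * n)%N ->
  (j <= n)%N /\ j%:R / height j <= c n.
Proof.
rewrite /offset => jn; have rank_lt : (c_rank (j%:R / height j) + j < n)%N by nia.
by split; [lia|apply: c_rank_le; lia].
Qed.

Definition bump (j : nat) (t : R) : R :=
  height j * plateau (offset j)%:R (offset j + j)%:R `|t|.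

Lemma bump_ge0 j t : 0 <= bump j t.
Proof. by rewrite mulr_ge0 ?plateau_ge0 // ltW // height_gt0. Qed.

Lemma continuous_bump j : continuous (bump j).
Proof.
move=> t; apply: (@continuousM _ _ (cst (height j)) (fun t => plateau _ _ `|t|)).
  exact: cvg_cst.
exact: continuous_plateau_norm.
Qed.

Lemma bump_vanish j t : `|t| <= j%:R -> bump j t = 0.
Proof.
move=> tj; rewrite /bump plateau_eq0 ?mulr0 //; apply/orP; left.
have : (j.+1 <= offset j)%N := offset_gt j.
by rewrite -(ler_nat R) -natr1 => ?; lra.
Qed.

Lemma integral_bump_le j :
  (\int[@lebesgue_measure R]_(x in setT) (bump j x)%:E
    <= (height j * (2 * (j.+2)%:R))%:E)%E.
Proof.
have offset_le : (offset j)%:R <= (offset j + j)%:R :> R by rewrite ler_nat leq_addr.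
apply: le_trans (integral_plateau_norm_le _ _ _ (ltW (height_gt0 j)) offset_le) _.
by rewrite natrD -[j.+2]addn2 natrD lee_fin; lra.
Qed.

Definition spikes : R -> R := lfsum bump.

Lemma spikes_frequently_large x : x != 0 ->
  forall m (M : R), exists2 n, (m <= n)%N & M <= c n * spikes (n%:R * x).
Proof.
move=> x0 m M; pose j := maxn m (Num.truncn (`|M| + `|x|)).+1.
have [Mj xj] : M < j%:R /\ `|x| < j%:R.
  have /andP[_ +] := truncn_itv (addr_ge0 (normr_ge0 M) (normr_ge0 x)).
  have : (Num.truncn (`|M| + `|x|)).+1%:R <= j%:R :> R by rewrite ler_nat leq_maxr.
  have := ler_norm M; have := normr_ge0 M; have := normr_ge0 x.
  by move=> *; split; lra.
have [n /andP[offset_lt nx_le]] :=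
  exists_nat_mul_in_window _ _ (ler0n R (offset j)) (eqbRL (normr_gt0 x) x0).
have [jn c_ge] : (j <= n)%N /\ j%:R / height j <= c n.
  apply: c_ge_of_offset_lt; rewrite -(ltr_nat R) natrM (lt_le_trans offset_lt) //.
  by rewrite mulrC ler_wpM2r // ltW.
exists n; first exact: leq_trans (leq_maxl _ _) jn.
have bump_eq : bump j (n%:R * x) = height j.
  rewrite /bump normrM normr_nat plateau_eq1 ?mulr1 // ltW //= natrD; lra.
have spikes_ge : height j <= spikes (n%:R * x).
  by rewrite -bump_eq (lfsum_ge_term _ bump_ge0 bump_vanish).
apply: le_trans (ltW Mj) _; rewrite -[j%:R](divfK (lt0r_neq0 (height_gt0 j))).
by rewrite ler_pM // ?divr_ge0 // ltW // height_gt0.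
Qed.
End Construction.

Theorem theorem1 (R : realType) (c : nat -> R) (hc : c @ \oo --> +oo) :
  exists f : R -> R,
    continuous f /\
    (@lebesgue_measure R).-integrable setT (fun x => (f x)%:E) /\
    (forall x : R, x != 0 ->
       limn_esup (fun n : nat => (c n * f (n%:R * x))%:E) = +oo%E).
Proof.
exists (spikes hc); split.
  exact: continuous_lfsum _ (continuous_bump hc) (bump_vanish hc).
split.
  apply: integrable_lfsum _ (bump_ge0 hc) (continuous_bump hc) (bump_vanish hc) _.
  apply: le_lt_trans (le_trans _ (@nneseries_height_le R)) (ltry _).
  apply: lee_nneseries => [j _ _|j _]; last exact: integral_bump_le.
  by apply: integral_ge0 => x _; rewrite lee_fin bump_ge0.
by move=> x x0; apply/limn_esup_EFin_eqy/spikes_frequently_large.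
Qed.
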